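(* Let $k\geq 8$ and $2k+1\leq n\leq 4k$ be integers, and let $h(n,k)=\binom{n-1}{k-1}-\binom{n-k-1}{k-1}+1$. Then \[ \binom{n-2}{k-2}+\binom{n-4}{k-2}+\frac{h(n,k)^2}{\binom{n-2}{k-2}+\binom{n-4}{k-2}}>2\binom{n-1}{k-1}. \] *)

From mathcomp Require Import all_boot all_order all_algebra.
Set Implicit Arguments. Unset Strict Implicit. Unset Printing Implicit Defensive.

(* h(n,k) = C(n-1,k-1) - C(n-k-1,k-1) + 1, as a natural number
   (the difference is nonnegative since C(.,k-1) is monotone, so truncated
   subtraction is exact). *)
Definition h (n k : nat) : nat := 'C(n - 1, k - 1) - 'C(n - k - 1, k - 1) + 1.

From mathcomp Require Import all_boot all_order all_algebra.
From mathcomp Require Import zify ring lra.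
Import Order.TTheory GRing.Theory Num.Theory.

(* Put k = i + 2 and n = i + t + 4, so that with a = C(n-1,k-1),
   D = C(n-2,k-2) + C(n-4,k-2) and r = C(n-k-1,k-1) we have h(n,k) = a - r + 1.
   After multiplying by D it suffices that 2 a r <= (a - D)^2, i.e. that
   2 (r/a) <= (1 - D/a)^2.  Neighbouring binomials give D/a = P/Q exactly for
   explicit cubics P, Q in i and t, and comparing C(m,j)/C(M,j) with (m/M)^j
   gives r/a <= rho^(k-1) <= rho^7 with rho = (n-k)/(n-1).  The range
   i+1 <= t <= 3i+4 is cut into four pieces on each of which rho <= p and
   P/Q <= c for constants with 2 p^7 <= (1-c)^2. *)

Lemma bin_mul_exp_le (m M j l : nat) : m <= M -> l <= j ->
  'C(m, j) * M ^ l <= 'C(M, j) * m ^ l.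
Proof.
move=> le_mM le_lj.
have diag i : 'C(m, i) * M ^ i <= 'C(M, i) * m ^ i.
  elim: i => [|i IHi]; first by rewrite !bin0.
  rewrite -(leq_pmul2l (ltn0Sn i)) !expnS !mulnA !mul_bin_left.
  have le_ratio : (m - i) * M <= (M - i) * m by nia.
  have := leq_mul le_ratio IHi; lia.
have [M0 | M_gt0] := posnP M; first by move: le_mM; rewrite M0 leqn0 => /eqP ->.
rewrite -(leq_pmul2r (_ : 0 < M ^ (j - l))); last by rewrite expn_gt0 M_gt0.
rewrite -mulnA -expnD subnKC //.
apply: leq_trans (diag j) _.
rewrite -mulnA leq_mul2l -[in m ^ j](subnKC le_lj) expnD leq_mul2l.
have le_exp : m ^ (j - l) <= M ^ (j - l) by case: (j - l) => // e; rewrite leq_exp2r.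
by rewrite le_exp !orbT.
Qed.

Lemma mul_bin_add_bin i t :
  ('C((i + t).+2, i) + 'C(i + t, i)) * ((i + t).+3 * (i + t).+2 * (i + t).+1)
  = 'C((i + t).+3, i.+1) * (i.+1 * ((i + t).+2 * (i + t).+1 + t.+2 * t.+1)).
Proof.
have e1 := mul_bin_diag (i + t).+3 i.
have e2 := mul_bin_down (i + t).+2 i.
have e3 := mul_bin_down (i + t).+1 i.
rewrite /= in e1 e2 e3.
rewrite (_ : (i + t).+2 - i = t.+2) in e2; last by lia.
rewrite (_ : (i + t).+1 - i = t.+1) in e3; last by lia.
have f1 := congr1 (muln^~ ((i + t).+2 * (i + t).+1)) e1.
have f2 := congr1 (muln^~ ((i + t).+3 * t.+1)) e2.
have f3 := congr1 (muln^~ ((i + t).+3 * (i + t).+2)) e3.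
have f4 := congr1 (muln^~ (t.+2 * t.+1)) e1.
rewrite /= in f1 f2 f3 f4.
lia.
Qed.

Local Open Scope ring_scope.

Section RealBounds.
Context {R : realFieldType}.

Lemma cone_coordinates (i0 t0 p q i t : R) :
  0 < q -> i0 <= i -> p * (i - i0) <= q * (t - t0) ->
  exists A B, [/\ 0 <= A, 0 <= B, i = i0 + q * A & t = t0 + p * A + B].
Proof.
move=> q_gt0 le_i0 le_pq; exists ((i - i0) / q), (t - t0 - p * ((i - i0) / q)).
split; last by ring.
- by rewrite divr_ge0 ?subr_ge0 // ltW.
- by rewrite subr_ge0 mulrA ler_pdivrMr // [_ * q]mulrC.
- by rewrite mulrCA divff ?gt_eqF // mulr1; ring.
Qed.

Lemma two_mul_le_sqr_sub (a D r f e : R) :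
  0 <= a -> D = f * a -> r <= e * a -> 2 * e <= (1 - f) ^+ 2 ->
  2 * a * r <= (a - D) ^+ 2.
Proof.
move=> a_ge0 -> le_r le_e.
have -> : (a - f * a) ^+ 2 = (1 - f) ^+ 2 * a ^+ 2 by ring.
apply: le_trans (ler_wpM2r (sqr_ge0 a) le_e); nra.
Qed.

Lemma two_mul_lt_add_sqr_div (a D r : R) :
  0 < D -> r <= a -> 2 * a * r <= (a - D) ^+ 2 ->
  2 * a < D + (a - r + 1) ^+ 2 / D.
Proof.
move=> D_gt0 le_ra le_sqr.
rewrite -(ltr_pM2r D_gt0) [(D + _) * D]mulrDl mulfVK ?gt_eqF //.
nra.
Qed.
End RealBounds.

Section BinomialRatio.
Context {R : realFieldType}.
Variables i t : R.

Let P := (i + 1) * ((i + t + 2) * (i + t + 1) + (t + 2) * (t + 1)).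
Let Q := (i + t + 3) * (i + t + 2) * (i + t + 1).
Let rho := (t + 1) / (i + t + 3).

Let case_bound (p c : R) : 6 <= i -> i + 1 <= t ->
  t + 1 <= p * (i + t + 3) -> P <= c * Q -> c <= 1 ->
  2 * p ^+ 7 <= (1 - c) ^+ 2 -> 2 * rho ^+ 7 <= (1 - P / Q) ^+ 2.
Proof.
move=> i_ge6 t_ge le_p le_c c_le1 le_pc.
have N_gt0 : 0 < i + t + 3 by lra.
have Q_gt0 : 0 < Q by rewrite /Q !mulr_gt0 //; lra.
have rho_ge0 : 0 <= rho by rewrite divr_ge0 ?ltW //; lra.
have le_rho : rho <= p by rewrite ler_pdivrMr // mulrC.
have le_f : P / Q <= c by rewrite ler_pdivrMr.
apply: le_trans (le_trans _ le_pc) _.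
  by rewrite ler_pM2l //; apply: lerXn2r; rewrite ?nnegrE // (le_trans rho_ge0).
by apply: lerXn2r; rewrite ?nnegrE; lra.
Qed.

Lemma two_rho7_le_sqr : 6 <= i -> i + 1 <= t <= 3 * i + 4 ->
  2 * rho ^+ 7 <= (1 - P / Q) ^+ 2.
Proof.
move=> i_ge6 /andP[t_ge t_le].
(* [P <= c * Q] is proved on the cone above the lower end of each piece; in
   coordinates of that cone with apex at [i = 6] it is a cubic with
   nonnegative coefficients. *)
have [? | ?] := lerP (2 * t) (3 * i + 4).
  apply: (case_bound (3/5) (7/10)); try lra; rewrite /P /Q.
  have [A [B [A0 B0 -> ->]]] := cone_coordinates 6 7 1 1 i t ltac:(lra) i_ge6 ltac:(lra).
  nra.
have [? | ?] := lerP t (2 * i + 3).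
  apply: (case_bound (2/3) (6/10)); try lra; rewrite /P /Q.
  have [A [B [A0 B0 -> ->]]] := cone_coordinates 6 11 3 2 i t ltac:(lra) i_ge6 ltac:(lra).
  nra.
have [? | ?] := lerP (2 * t) (5 * i + 8).
  apply: (case_bound (5/7) (53/100)); try lra; rewrite /P /Q.
  have [A [B [A0 B0 -> ->]]] := cone_coordinates 6 15 2 1 i t ltac:(lra) i_ge6 ltac:(lra).
  nra.
apply: (case_bound (3/4) (46/100)); try lra; rewrite /P /Q.
have [A [B [A0 B0 -> ->]]] := cone_coordinates 6 19 5 2 i t ltac:(lra) i_ge6 ltac:(lra).
nra.
Qed.

Lemma binomial_ratio_bound (a D r : R) : 6 <= i -> i + 1 <= t <= 3 * i + 4 ->
  0 <= a -> D * Q = a * P -> r * (i + t + 3) ^+ 7 <= a * (t + 1) ^+ 7 ->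
  2 * a * r <= (a - D) ^+ 2.
Proof.
move=> i_ge6 t_range a_ge0 eD le_r.
have /andP[t_ge _] := t_range.
have N_gt0 : 0 < i + t + 3 by lra.
have Q_gt0 : 0 < Q by rewrite /Q !mulr_gt0 //; lra.
have := two_rho7_le_sqr i_ge6 t_range.
apply: two_mul_le_sqr_sub => //.
  by rewrite mulrAC [P * a]mulrC -eD mulfK ?gt_eqF.
by rewrite /rho expr_div_n mulrAC ler_pdivlMr ?exprn_gt0 // [_ * a]mulrC.
Qed.
End BinomialRatio.

Theorem lemma2p9 (k n : nat) (hk : (8 <= k)%N) (hn1 : (2 * k + 1 <= n)%N)
    (hn2 : (n <= 4 * k)%N) :
  let D : rat := ('C(n - 2, k - 2))%:R + ('C(n - 4, k - 2))%:R in
  D + ((h n k)%:R : rat) ^+ 2 / D > 2 * ('C(n - 1, k - 1))%:R.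
Proof.
have [i ek] : exists i, k = i.+2 by exists (k - 2)%N; lia.
subst k.
have [t en] : exists t, n = (i + t)%N.+4 by exists (n - i - 4)%N; lia.
subst n.
rewrite /h !subSS !subn0 (_ : ((i + t).+2 - i - 1 = t.+1)%N); last by lia.
set a := 'C((i + t)%N.+3, i.+1); set r := 'C(t.+1, i.+1).
have le_ra : (r <= a)%N by rewrite leq_bin2l //; lia.
rewrite natrD natrB //.
apply: two_mul_lt_add_sqr_div.
- by rewrite -natrD ltr0n addn_gt0 bin_gt0; lia.
- by rewrite ler_nat.
apply: (binomial_ratio_bound i%:R t%:R).
- by rewrite ler_nat; lia.
- by rewrite -natrM -!natrD !natr1 !ler_nat; lia.
- exact: ler0n.
- by rewrite -!natrD !natr1 -!natrM -!natrD -!natrM !addn3 !addn2 mul_bin_add_bin.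
- by rewrite -!natrD !natr1 -!natrX -!natrM ler_nat addn3 bin_mul_exp_le //; lia.
Qed.
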